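(* Let $X$ be a finite set with $|X|=n$, $0\notin X$, $W=X\cup\{0\}$. Let $\mathfrak{V}$ be a $\big(\binom{n}{2}_{\,n-2}\ \binom{n}{3}_{\,3}\big)$-configuration whose point set is $\mathcal{P}_2(X)$, and let $\mathfrak{M}$ be the structure with point set $\mathcal{P}_2(W)$ whose lines are the lines of $\mathfrak{V}$ together with all sets $\{\{0,x\},\{0,y\},\{x,y\}\}$ for distinct $x,y\in X$. Let $H$ be a hyperplane of $\mathfrak{M}$. On $X$ define $x\sim y$ iff $x=y$, or $x\neq y$ and $\{x,y\}\in H$. Then $\sim$ is an equivalence relation on $X$.
   Context: $\mathcal{P}_2(Y)$ denotes the set of $2$-element subsets of $Y$. A $(v_r\ b_k)$-configuration is a partial linear space with $v$ points and $b$ lines, each point on exactly $r$ lines and each line containing exactly $k$ points. A subspace is a set of points containing every line that meets it in at least two points; a hyperplane is a proper subspace meeting every line. *)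

From mathcomp Require Import all_boot.
Set Implicit Arguments. Unset Strict Implicit. Unset Printing Implicit Defensive.

Definition P2 (Y : finType) : {set {set Y}} := [set A : {set Y} | #|A| == 2].

Definition partial_linear_space (Pt : finType) (P : {set Pt}) (L : {set {set Pt}}) : Prop :=
  (forall l, l \in L -> l \subset P) /\
  (forall l, l \in L -> 2 <= #|l|) /\
  (forall l1 l2 p q, l1 \in L -> l2 \in L -> p != q ->
      p \in l1 -> q \in l1 -> p \in l2 -> q \in l2 -> l1 = l2).

Definition configuration (v r b k : nat) (Pt : finType) (P : {set Pt}) (L : {set {set Pt}}) : Prop :=
  [/\ partial_linear_space P L, #|P| = v, #|L| = b,
      (forall p, p \in P -> #|[set l in L | p \in l]| = r) &
      (forall l, l \in L -> #|l| = k)].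

Definition subspace (Pt : finType) (P : {set Pt}) (L : {set {set Pt}}) (S : {set Pt}) : Prop :=
  S \subset P /\ (forall l, l \in L -> 2 <= #|l :&: S| -> l \subset S).

Definition hyperplane (Pt : finType) (P : {set Pt}) (L : {set {set Pt}}) (H : {set Pt}) : Prop :=
  [/\ subspace P L H, H != P & (forall l, l \in L -> l :&: H != set0)].

(* W = X ∪ {0} is modelled as option X, with 0 = None and x ∈ X as Some x. *)
Definition liftpt (X : finType) (A : {set X}) : {set option X} := Some @: A.

Definition M_lines (X : finType) (LV : {set {set {set X}}}) : {set {set {set option X}}} :=
  [set [set liftpt p | p in l] | l : {set {set X}} in LV] :|:
  [set [set [set None; Some xy.1]; [set None; Some xy.2]; [set Some xy.1; Some xy.2]]
     | xy : X * X & xy.1 != xy.2].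

Definition simH (X : finType) (H : {set {set option X}}) (x y : X) : bool :=
  (x == y) || ((x != y) && ([set Some x; Some y] \in H)).

(** As H is a subspace, {x,y} \in H forces
    {0,x} and {0,y} to lie both in H or both outside it.  Hence if x ~ y ~ z,
    either {0,x} and {0,z} are in H, and the subspace property puts {x,z}
    in H, or both are outside H, and since H meets the line
    {{0,x},{0,z},{x,z}}, again {x,z} \in H. *)

From mathcomp Require Import all_boot.

Set Implicit Arguments.
Unset Strict Implicit.
Unset Printing Implicit Defensive.

Section Subspace.
Variables (Pt : finType) (P : {set Pt}) (L : {set {set Pt}}) (S : {set Pt}).
Hypothesis subS : subspace P L S.

Lemma subspace_line_closed l p q r :
  l \in L -> p != q -> p \in l -> q \in l -> r \in l ->
  p \in S -> q \in S -> r \in S.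
Proof.
move=> lL npq pl ql rl pS qS; apply: (subsetP _ r rl).
apply: subS.2 => //; have <- : #|[set p; q]| = 2 by rewrite cards2 npq.
by apply: subset_leq_card; apply/subsetP => u /set2P [] ->; rewrite inE ?pl ?ql.
Qed.

End Subspace.

Section TriangleLines.
Variables (X : finType) (LV : {set {set {set X}}}) (H : {set {set option X}}).
Hypotheses (subH : subspace (P2 (option X)) (M_lines LV) H)
           (meetH : forall l, l \in M_lines LV -> l :&: H != set0).

Definition zpair (x : X) : {set option X} := [set None; Some x].
Definition lpair (x y : X) : {set option X} := [set Some x; Some y].

Lemma zpair_inj : injective zpair.
Proof.
move=> x y exy; have : Some y \in zpair x by rewrite exy !inE eqxx orbT.
by rewrite !inE => /eqP [].
Qed.

Lemma zpair_neq_lpair x y z : zpair x != lpair y z.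
Proof.
apply/eqP => e; have : None \in lpair y z by rewrite -e !inE eqxx.
by rewrite !inE.
Qed.

Lemma triangle_M_line x y : x != y ->
  [set zpair x; zpair y; lpair x y] \in M_lines LV.
Proof. by move=> nxy; apply/setUP; right; apply/imsetP; exists (x, y); rewrite ?inE. Qed.

Let closed_triangle x y p q r : x != y -> p != q ->
  p \in [set zpair x; zpair y; lpair x y] ->
  q \in [set zpair x; zpair y; lpair x y] ->
  r \in [set zpair x; zpair y; lpair x y] ->
  p \in H -> q \in H -> r \in H.
Proof. by move=> /triangle_M_line; exact: (subspace_line_closed subH). Qed.

Lemma zpair_in_hyperplane_eq x y : x != y -> lpair x y \in H ->
  (zpair x \in H) = (zpair y \in H).
Proof.
move=> nxy eH; apply/idP/idP => zH.
- by apply: (closed_triangle nxy (zpair_neq_lpair x x y)) zH eH;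
    rewrite !inE eqxx ?orbT.
- by apply: (closed_triangle nxy (zpair_neq_lpair y x y)) zH eH;
    rewrite !inE eqxx ?orbT.
Qed.

Lemma lpair_in_hyperplane x y : x != y ->
  (zpair x \in H) = (zpair y \in H) -> lpair x y \in H.
Proof.
move=> nxy; case: (boolP (zpair x \in H)) => [xH /esym yH | xH /esym/negbT yH].
- have nzxy : zpair x != zpair y by rewrite (inj_eq zpair_inj).
  by apply: (closed_triangle nxy nzxy) xH yH; rewrite !inE eqxx ?orbT.
- have /set0Pn [u] := meetH (triangle_M_line nxy).
  by rewrite !inE -orbA => /andP [/or3P [] /eqP -> uH] //; rewrite uH in xH yH.
Qed.

End TriangleLines.

Theorem lemma3p1 (X : finType) (n : nat) (LV : {set {set {set X}}})
    (H : {set {set option X}}) :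
  #|X| = n ->
  configuration 'C(n, 2) (n - 2) 'C(n, 3) 3 (P2 X) LV ->
  hyperplane (P2 (option X)) (M_lines LV) H ->
  [/\ reflexive (simH H), symmetric (simH H) & transitive (simH H)].
Proof.
move=> _ _ [subH _ meetH]; split.
- by move=> x; rewrite /simH eqxx.
- by move=> x y; rewrite /simH eq_sym setUC.
move=> y x z; rewrite /simH.
have [<- // | nxy] := eqVneq x y.
have [<- | nyz] := eqVneq y z; first by move=> /= -> _; rewrite nxy orbT.
have [// | nxz] := eqVneq x z; rewrite /= => exy eyz.
apply: (lpair_in_hyperplane subH meetH nxz).
by rewrite (zpair_in_hyperplane_eq subH nxy exy) (zpair_in_hyperplane_eq subH nyz eyz).
Qed.
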